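(* Under the assumption $N_s,N_r\ge 2K+1$, let $\mathbf L_K$ denote the operator $\mathbf L$ of truncation order $K$. Then there is a constant $C>0$ independent of $K$ (depending on $k_0R$) such that $$\mathrm{cond}(\mathbf L_K)=\frac{\max_{|n|\le K}|d_n|}{\min_{|n|\le K}|d_n|}\le C\,(C_RK)^K\quad\text{for all sufficiently large }K,$$ where $C_R=2/(ek_0R)$.
   Context: Let $k_0>0$, $R>0$, $z_0\in\mathbb R^2$, $K\in\mathbb N$, $N_s,N_r\in\mathbb N$. Let $\theta_s=2\pi s/N_s$, $\xi_s=(\cos\theta_s,\sin\theta_s)$, $\theta_r=2\pi r/N_r$. Define $\mathbf A=(A_{sm})\in\mathbb C^{N_s\times(2K+1)}$, $\mathbf B=(B_{rn})\in\mathbb C^{N_r\times(2K+1)}$, $m,n=-K,\dots,K$, by $A_{sm}=e^{ik_0\xi_s\cdot z_0}e^{im(\pi/2-\theta_s)}$, $B_{rn}=\frac i4\overline{H_n^{(1)}(k_0R)}e^{-in\theta_r}$, with $H_n^{(1)}$ the Hankel function of the first kind, and $d_n=\frac i4H_n^{(1)}(k_0R)$. The operator $\mathbf L:\mathbb C^{(2K+1)\times(2K+1)}\to\mathbb C^{N_s\times N_r}$ is $\mathbf L(\mathbf X)=\mathbf A\mathbf X\mathbf B^H$ (Frobenius norms), and $\mathrm{cond}$ denotes the ratio of its largest to smallest singular value. *)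

From Stdlib Require Import Reals Lra ZArith ClassicalEpsilon.
Open Scope R_scope.

Definition Cx : Type := (R * R)%type.
Definition Cadd (a b : Cx) : Cx := (fst a + fst b, snd a + snd b).
Definition Cmul (a b : Cx) : Cx :=
  (fst a * fst b - snd a * snd b, fst a * snd b + snd a * fst b).
Definition Cconj (a : Cx) : Cx := (fst a, - snd a).
Definition Cmod2 (a : Cx) : R := fst a ^ 2 + snd a ^ 2.
Definition Cmod (a : Cx) : R := sqrt (Cmod2 a).
Definition Cexpi (t : R) : Cx := (cos t, sin t).
Definition Cscal (r : R) (a : Cx) : Cx := (r * fst a, r * snd a).

Fixpoint rsum (n : nat) (f : nat -> R) : R :=
  match n with O => 0 | S k => rsum k f + f k end.
Fixpoint csum (n : nat) (f : nat -> Cx) : Cx :=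
  match n with O => (0, 0) | S k => Cadd (csum k f) (f k) end.
Fixpoint rmax_upto (n : nat) (f : nat -> R) : R :=
  match n with O => f O | S k => Rmax (rmax_upto k f) (f (S k)) end.
Fixpoint rmin_upto (n : nat) (f : nat -> R) : R :=
  match n with O => f O | S k => Rmin (rmin_upto k f) (f (S k)) end.

Definition series_value (a : nat -> R) : R :=
  epsilon (inhabits 0) (fun l => Un_cv (fun N => sum_f_R0 a N) l).

(** Euler–Mascheroni constant and psi(m+1) = H_m - gamma. *)
Definition harmonic (m : nat) : R := rsum m (fun k => / INR (S k)).
Definition euler_gamma : R :=
  epsilon (inhabits 0) (fun g => Un_cv (fun n => harmonic n - ln (INR n)) g).
Definition psi1 (m : nat) : R := harmonic m - euler_gamma.

(** Bessel functions of integer order n >= 0 (DLMF 10.2.2, 10.8.1), x > 0. *)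
Definition BesselJ (n : nat) (x : R) : R :=
  series_value (fun k => (-1) ^ k / (INR (fact k) * INR (fact (n + k)))
                          * (x / 2) ^ (2 * k + n)).
Definition BesselY (n : nat) (x : R) : R :=
  - (/ PI) * / ((x / 2) ^ n)
      * rsum n (fun k => INR (fact (n - k - 1)) / INR (fact k) * (x ^ 2 / 4) ^ k)
  + (2 / PI) * ln (x / 2) * BesselJ n x
  - ((x / 2) ^ n / PI)
      * series_value (fun k => (psi1 k + psi1 (n + k)) * (- (x ^ 2 / 4)) ^ k
                               / (INR (fact k) * INR (fact (n + k)))).

(** Hankel function of the first kind, integer order n, H_{-n} = (-1)^n H_n. *)
Definition Hankel1 (n : Z) (x : R) : Cx :=
  let m := Z.abs_nat n in
  let h : Cx := (BesselJ m x, BesselY m x) in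
  if (n <? 0)%Z then Cscal ((-1) ^ m) h else h.

Definition dcoef (k0 R0 : R) (n : Z) : Cx := Cmul (0, / 4) (Hankel1 n (k0 * R0)).

(** index j in 0..2K  <->  n = j - K in -K..K *)
Definition idx (K j : nat) : Z := (Z.of_nat j - Z.of_nat K)%Z.

Definition theta (N s : nat) : R := 2 * PI * INR s / INR N.

(** A_{sm} and B_{rn}; s in 0..N_s-1, r in 0..N_r-1. *)
Definition Aent (k0 : R) (z0 : R * R) (Ns s : nat) (m : Z) : Cx :=
  let th := theta Ns s in
  Cmul (Cexpi (k0 * (cos th * fst z0 + sin th * snd z0)))
       (Cexpi (IZR m * (PI / 2 - th))).
Definition Bent (k0 R0 : R) (Nr r : nat) (n : Z) : Cx :=
  Cmul (Cmul (0, / 4) (Cconj (Hankel1 n (k0 * R0))))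
       (Cexpi (- (IZR n * theta Nr r))).

(** Matrices X = (X_{mn}), m,n = -K..K, as functions Z -> Z -> C. *)
Definition Frob2 (K : nat) (X : Z -> Z -> Cx) : R :=
  rsum (2 * K + 1) (fun i => rsum (2 * K + 1) (fun j => Cmod2 (X (idx K i) (idx K j)))).

(** L(X) = A X B^H, entry (s, r). *)
Definition Lop (k0 R0 : R) (z0 : R * R) (K Ns Nr : nat) (X : Z -> Z -> Cx)
  (s r : nat) : Cx :=
  csum (2 * K + 1) (fun i => csum (2 * K + 1) (fun j =>
    Cmul (Cmul (Aent k0 z0 Ns s (idx K i)) (X (idx K i) (idx K j)))
         (Cconj (Bent k0 R0 Nr r (idx K j))))).

Definition LFrob2 (k0 R0 : R) (z0 : R * R) (K Ns Nr : nat) (X : Z -> Z -> Cx) : R :=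
  rsum Ns (fun s => rsum Nr (fun r => Cmod2 (Lop k0 R0 z0 K Ns Nr X s r))).

Definition quot_set (k0 R0 : R) (z0 : R * R) (K Ns Nr : nat) (v : R) : Prop :=
  exists X : Z -> Z -> Cx, Frob2 K X <> 0 /\
    v = sqrt (LFrob2 k0 R0 z0 K Ns Nr X) / sqrt (Frob2 K X).

Definition is_glb (E : R -> Prop) (m : R) : Prop :=
  (forall x, E x -> m <= x) /\ (forall b, (forall x, E x -> b <= x) -> b <= m).

(** Largest / smallest singular value of L (domain dimension (2K+1)^2 <= Ns*Nr),
    as max / min of ||L X|| / ||X||. *)
Definition sigma_max (k0 R0 : R) (z0 : R * R) (K Ns Nr : nat) : R :=
  epsilon (inhabits 0) (is_lub (quot_set k0 R0 z0 K Ns Nr)).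
Definition sigma_min (k0 R0 : R) (z0 : R * R) (K Ns Nr : nat) : R :=
  epsilon (inhabits 0) (is_glb (quot_set k0 R0 z0 K Ns Nr)).
Definition condL (k0 R0 : R) (z0 : R * R) (K Ns Nr : nat) : R :=
  sigma_max k0 R0 z0 K Ns Nr / sigma_min k0 R0 z0 K Ns Nr.

Definition dmax (k0 R0 : R) (K : nat) : R :=
  rmax_upto (2 * K) (fun j => Cmod (dcoef k0 R0 (idx K j))).
Definition dmin (k0 R0 : R) (K : nat) : R :=
  rmin_upto (2 * K) (fun j => Cmod (dcoef k0 R0 (idx K j))).

Definition C_R (k0 R0 : R) : R := 2 / (exp 1 * k0 * R0).

From Stdlib Require Import Reals ZArith.
From Stdlib Require Import Lra Lia Psatz Bool ClassicalEpsilon Classical.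
Open Scope R_scope.

(* The operator is diagonalised by the discrete Fourier transform on the
   equispaced angles: since two indices in -K..K differ by less than N_s and N_r,
   sum_r e^(i (n-n') theta_r) = N_r delta_(n n'), whence
   ||L X||_F^2 = N_s N_r sum_(m,n) |X_mn|^2 |d_n|^2 and the singular values of L are
   sqrt(N_s N_r) |d_n|.  For the growth, |d_n| = |H_|n|(x)|/4 with x = k0 R, and the
   series defining Y_n show that |H_n(x)| equals (n-1)!/(pi (x/2)^n) up to O((x/2)^n).
   Stirling's bound (K-1)! <= e (K/e)^K turns the largest |d_n| into O((C_R K)^K),
   while |H_n(x)| >= 1 for large n keeps the smallest one away from 0. *)

Lemma rsum_ext n f g :
  (forall i, (i < n)%nat -> f i = g i) -> rsum n f = rsum n g.
Proof.
  revert f g; induction n as [|n IH]; intros f g H; simpl; [reflexivity|].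
  rewrite (IH f g), (H n); [reflexivity | lia | intros; apply H; lia].
Qed.

Lemma rsum_scal n c f : rsum n (fun i => c * f i) = c * rsum n f.
Proof. induction n as [|n IH]; simpl; [ring | rewrite IH; ring]. Qed.

Lemma rsum_add n f g : rsum n (fun i => f i + g i) = rsum n f + rsum n g.
Proof. induction n as [|n IH]; simpl; [ring | rewrite IH; ring]. Qed.

Lemma rsum_lin n a b f g :
  rsum n (fun i => a * f i - b * g i) = a * rsum n f - b * rsum n g.
Proof. induction n as [|n IH]; simpl; [ring | rewrite IH; ring]. Qed.

Lemma rsum_const n c : rsum n (fun _ => c) = INR n * c.
Proof. induction n as [|n IH]; simpl rsum; [simpl; ring | rewrite IH, S_INR; ring]. Qed.

Lemma rsum_zero n f : (forall i, (i < n)%nat -> f i = 0) -> rsum n f = 0.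
Proof. intros H. rewrite (rsum_ext n f (fun _ => 0)), rsum_const by auto. ring. Qed.

Lemma rsum_telescope n g : rsum n (fun i => g (S i) - g i) = g n - g O.
Proof. induction n as [|n IH]; simpl; [ring | rewrite IH; ring]. Qed.

Lemma rsum_comm n m f :
  rsum n (fun i => rsum m (fun j => f i j)) = rsum m (fun j => rsum n (fun i => f i j)).
Proof.
  revert f; induction n as [|n IH]; intros f; simpl.
  - symmetry; apply rsum_zero; auto.
  - rewrite IH, <- rsum_add; reflexivity.
Qed.

Lemma rsum_mul n m f g :
  rsum n f * rsum m g = rsum n (fun i => rsum m (fun j => f i * g j)).
Proof. induction n as [|n IH]; simpl; [ring | rewrite <- IH, rsum_scal; ring]. Qed.

Lemma rsum_le n f g : (forall i, (i < n)%nat -> f i <= g i) -> rsum n f <= rsum n g.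
Proof.
  revert f g; induction n as [|n IH]; intros f g H; simpl; [lra|].
  apply Rplus_le_compat; [apply IH; intros; apply H; lia | apply H; lia].
Qed.

Lemma rsum_nonneg n f : (forall i, (i < n)%nat -> 0 <= f i) -> 0 <= rsum n f.
Proof. intros H. rewrite <- (rsum_zero n (fun _ => 0)) by auto. apply rsum_le, H. Qed.

Lemma rsum_single n f j :
  (j < n)%nat -> (forall i, (i < n)%nat -> i <> j -> f i = 0) -> rsum n f = f j.
Proof.
  revert f; induction n as [|n IH]; intros f Hj H; [lia|]; simpl.
  destruct (Nat.eq_dec j n) as [->|Hjn].
  - rewrite rsum_zero; [ring | intros; apply H; lia].
  - rewrite IH, (H n); [ring | lia | lia | lia | intros; apply H; lia].
Qed.

Lemma rsum_term_le n f j :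
  (j < n)%nat -> (forall i, (i < n)%nat -> 0 <= f i) -> f j <= rsum n f.
Proof.
  revert f; induction n as [|n IH]; intros f Hj H; [lia|]; simpl.
  assert (0 <= f n) by (apply H; lia).
  destruct (Nat.eq_dec j n) as [->|Hjn].
  - assert (0 <= rsum n f) by (apply rsum_nonneg; intros; apply H; lia). lra.
  - assert (f j <= rsum n f) by (apply IH; [lia | intros; apply H; lia]). lra.
Qed.

Lemma rsum_sum_f_R0 n f : rsum (S n) f = sum_f_R0 f n.
Proof. induction n as [|n IH]; simpl; [ring | simpl in IH; rewrite <- IH; reflexivity]. Qed.

Lemma csum_fst n f : fst (csum n f) = rsum n (fun i => fst (f i)).
Proof. induction n as [|n IH]; simpl; [reflexivity | rewrite IH; reflexivity]. Qed.

Lemma csum_snd n f : snd (csum n f) = rsum n (fun i => snd (f i)).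
Proof. induction n as [|n IH]; simpl; [reflexivity | rewrite IH; reflexivity]. Qed.

Lemma Cx_eq (a b : Cx) : fst a = fst b -> snd a = snd b -> a = b.
Proof. destruct a, b; simpl; intros -> ->; reflexivity. Qed.

Lemma csum_ext n f g :
  (forall i, (i < n)%nat -> f i = g i) -> csum n f = csum n g.
Proof.
  intros H. apply Cx_eq; rewrite ?csum_fst, ?csum_snd; apply rsum_ext;
    intros i Hi; rewrite H by exact Hi; reflexivity.
Qed.

Lemma csum_add n f g : csum n (fun i => Cadd (f i) (g i)) = Cadd (csum n f) (csum n g).
Proof.
  apply Cx_eq; unfold Cadd; simpl; rewrite ?csum_fst, ?csum_snd, <- rsum_add;
    apply rsum_ext; reflexivity.
Qed.

Lemma csum_comm n m f :
  csum n (fun i => csum m (fun j => f i j)) = csum m (fun j => csum n (fun i => f i j)).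
Proof.
  revert f; induction n as [|n IH]; intros f; simpl.
  - apply Cx_eq; rewrite ?csum_fst, ?csum_snd; symmetry; apply rsum_zero; auto.
  - rewrite IH, <- csum_add; reflexivity.
Qed.

Lemma Cmul_csum_l n a f : Cmul a (csum n f) = csum n (fun i => Cmul a (f i)).
Proof.
  induction n as [|n IH]; simpl; [apply Cx_eq; simpl; ring|].
  rewrite <- IH. apply Cx_eq; unfold Cmul, Cadd; simpl; ring.
Qed.

Lemma Cmul_csum_r n a f : Cmul (csum n f) a = csum n (fun i => Cmul (f i) a).
Proof.
  induction n as [|n IH]; simpl; [apply Cx_eq; simpl; ring|].
  rewrite <- IH. apply Cx_eq; unfold Cmul, Cadd; simpl; ring.
Qed.

Lemma Cmod2_Cmul a b : Cmod2 (Cmul a b) = Cmod2 a * Cmod2 b.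
Proof. destruct a, b; unfold Cmod2, Cmul; simpl; ring. Qed.

Lemma Cmod2_Cexpi t : Cmod2 (Cexpi t) = 1.
Proof. unfold Cmod2, Cexpi; simpl. pose proof (sin2_cos2 t) as H. unfold Rsqr in H. lra. Qed.

Lemma Cmod2_nonneg a : 0 <= Cmod2 a.
Proof. unfold Cmod2. nra. Qed.

Lemma Cmod_nonneg a : 0 <= Cmod a.
Proof. apply sqrt_pos. Qed.

Lemma Cmod2_Cmod a : Cmod2 a = Cmod a * Cmod a.
Proof. unfold Cmod. rewrite sqrt_sqrt; [reflexivity | apply Cmod2_nonneg]. Qed.

Lemma Cmod_Cmul a b : Cmod (Cmul a b) = Cmod a * Cmod b.
Proof. unfold Cmod. rewrite Cmod2_Cmul. apply sqrt_mult; apply Cmod2_nonneg. Qed.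

Lemma Cexpi_add s t : Cexpi (s + t) = Cmul (Cexpi s) (Cexpi t).
Proof. unfold Cexpi, Cmul; simpl. rewrite cos_plus, sin_plus. f_equal; ring. Qed.

Lemma Cconj_Cmul a b : Cconj (Cmul a b) = Cmul (Cconj a) (Cconj b).
Proof. destruct a, b; unfold Cconj, Cmul; simpl. f_equal; ring. Qed.

Lemma Cconj_Cexpi t : Cconj (Cexpi t) = Cexpi (- t).
Proof. unfold Cconj, Cexpi; simpl. rewrite cos_neg, sin_neg. reflexivity. Qed.

Lemma sin_PI_mul_div_neq_0 (m : Z) (N : nat) :
  (0 < Z.abs m < Z.of_nat N)%Z -> sin (PI * IZR m / INR N) <> 0.
Proof.
  intros Hm Hsin. apply sin_eq_0_0 in Hsin as [k Hk].
  assert (HN : 0 < INR N) by (apply lt_0_INR; lia).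
  pose proof PI_RGT_0.
  assert (Hmk : IZR m = IZR (k * Z.of_nat N)).
  { rewrite mult_IZR, <- INR_IZR_INZ.
    replace (IZR m) with (PI * IZR m / INR N * (INR N / PI)) by (field; lra).
    rewrite Hk. field. lra. }
  apply eq_IZR in Hmk. subst m. rewrite Z.abs_mul, (Z.abs_eq (Z.of_nat N)) in Hm by lia.
  destruct (Z.eq_dec k 0) as [->|Hk0]; [simpl in Hm; lia|].
  assert (1 <= Z.abs k)%Z by lia. nia.
Qed.

(* Telescoping: 2 sin(a/2) cos(a r) = sin(a r + a/2) - sin(a r - a/2), and similarly for sin. *)
Lemma rsum_cos_sin_arith_eq_0 (a : R) (N : nat) :
  sin (a / 2) <> 0 -> cos (a * INR N) = 1 -> sin (a * INR N) = 0 ->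
  rsum N (fun r => cos (a * INR r)) = 0 /\ rsum N (fun r => sin (a * INR r)) = 0.
Proof.
  intros Hs Hc HsN.
  assert (Hshift : forall r, a * INR (S r) - a / 2 = a * INR r + a / 2)
    by (intros; rewrite S_INR; field).
  split; apply Rmult_eq_reg_l with (2 * sin (a / 2)); try lra;
    rewrite <- rsum_scal, Rmult_0_r.
  - rewrite (rsum_ext N _ (fun r => sin (a * INR (S r) - a / 2) - sin (a * INR r - a / 2)))
      by (intros r _; rewrite Hshift, sin_plus, sin_minus; ring).
    rewrite (rsum_telescope N (fun r => sin (a * INR r - a / 2))).
    rewrite sin_minus, Hc, HsN; simpl. rewrite Rmult_0_r, Rminus_0_l, sin_neg. ring.
  - rewrite (rsum_ext N _ (fun r => -1 *
        (cos (a * INR (S r) - a / 2) - cos (a * INR r - a / 2))))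
      by (intros r _; rewrite Hshift, cos_plus, cos_minus; ring).
    rewrite rsum_scal, (rsum_telescope N (fun r => cos (a * INR r - a / 2))).
    rewrite cos_minus, Hc, HsN; simpl. rewrite Rmult_0_r, Rminus_0_l, cos_neg. ring.
Qed.

Lemma rsum_cos_sin_theta_eq_0 (N : nat) (m : Z) :
  (0 < Z.abs m < Z.of_nat N)%Z ->
  rsum N (fun r => cos (IZR m * theta N r)) = 0 /\
  rsum N (fun r => sin (IZR m * theta N r)) = 0.
Proof.
  intros Hm. assert (HN : 0 < INR N) by (apply lt_0_INR; lia).
  set (a := 2 * PI * IZR m / INR N).
  assert (HaN : a * INR N = 2 * (PI * IZR m)) by (unfold a; field; lra).
  assert (Ha : forall r, IZR m * theta N r = a * INR r) by (intros; unfold theta, a; field; lra).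
  rewrite (rsum_ext N (fun r => cos (IZR m * theta N r)) (fun r => cos (a * INR r))),
    (rsum_ext N (fun r => sin (IZR m * theta N r)) (fun r => sin (a * INR r)))
    by (intros; rewrite Ha; reflexivity).
  apply rsum_cos_sin_arith_eq_0; rewrite ?HaN.
  - replace (a / 2) with (PI * IZR m / INR N) by (unfold a; field; lra).
    apply sin_PI_mul_div_neq_0, Hm.
  - rewrite cos_2a_sin, sin_eq_0_1 by (exists m; ring). ring.
  - rewrite sin_2a, sin_eq_0_1 by (exists m; ring). ring.
Qed.

Lemma discrete_parseval N n (p : nat -> Z) (c : nat -> Cx) :
  (forall j k, (j < n)%nat -> (k < n)%nat -> j <> k ->
     (0 < Z.abs (p j - p k) < Z.of_nat N)%Z) ->
  rsum N (fun r => Cmod2 (csum n (fun j => Cmul (c j) (Cexpi (IZR (p j) * theta N r))))) =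
  INR N * rsum n (fun j => Cmod2 (c j)).
Proof.
  intros Hp.
  set (P := fun j k => fst (c j) * fst (c k) + snd (c j) * snd (c k)).
  set (Q := fun j k => snd (c j) * fst (c k) - fst (c j) * snd (c k)).
  transitivity (rsum N (fun r => rsum n (fun j => rsum n (fun k =>
     P j k * cos (IZR (p j - p k) * theta N r) - Q j k * sin (IZR (p j - p k) * theta N r))))).
  { apply rsum_ext; intros r _. unfold Cmod2. rewrite csum_fst, csum_snd, <- !Rsqr_pow2.
    unfold Rsqr. rewrite !rsum_mul, <- rsum_add. apply rsum_ext; intros j _.
    rewrite <- rsum_add. apply rsum_ext; intros k _.
    unfold P, Q, Cmul, Cexpi; simpl.
    replace (IZR (p j - p k) * theta N r) with (IZR (p j) * theta N r - IZR (p k) * theta N r)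
      by (rewrite minus_IZR; ring).
    rewrite cos_minus, sin_minus. ring. }
  rewrite rsum_comm, <- rsum_scal. apply rsum_ext; intros j Hj.
  rewrite rsum_comm, (rsum_single n _ j Hj).
  - rewrite rsum_lin, Z.sub_diag.
    rewrite (rsum_ext N (fun r => cos (IZR 0 * theta N r)) (fun _ => 1))
      by (intros; rewrite Rmult_0_l, cos_0; reflexivity).
    rewrite (rsum_ext N (fun r => sin (IZR 0 * theta N r)) (fun _ => 0))
      by (intros; rewrite Rmult_0_l, sin_0; reflexivity).
    rewrite !rsum_const. unfold P, Cmod2. ring.
  - intros k Hk Hkj.
    destruct (rsum_cos_sin_theta_eq_0 N (p j - p k)) as [Hcos Hsin]; [apply Hp; auto|].
    rewrite rsum_lin, Hcos, Hsin. ring.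
Qed.

Definition conjB_coef (k0 R0 : R) (n : Z) : Cx :=
  Cconj (Cmul (0, / 4) (Cconj (Hankel1 n (k0 * R0)))).

Lemma Cmod2_conjB_coef k0 R0 n : Cmod2 (conjB_coef k0 R0 n) = Cmod2 (dcoef k0 R0 n).
Proof.
  unfold conjB_coef, dcoef. destruct (Hankel1 n (k0 * R0)).
  unfold Cmod2, Cconj, Cmul; simpl. ring.
Qed.

Lemma Cmul_rearrange a b c d e f :
  Cmul (Cmul (Cmul a (Cmul b c)) d) (Cmul e f) = Cmul a (Cmul (Cmul (Cmul (Cmul b d) e) c) f).
Proof. apply Cx_eq; unfold Cmul; simpl; ring. Qed.

(* L(X)_(sr) as a trigonometric polynomial in theta_r whose coefficients are
   trigonometric polynomials in theta_s. *)
Lemma Lop_trig_poly k0 R0 z0 K Ns Nr X s r :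
  Lop k0 R0 z0 K Ns Nr X s r =
  Cmul (Cexpi (k0 * (cos (theta Ns s) * fst z0 + sin (theta Ns s) * snd z0)))
   (csum (2 * K + 1) (fun j => Cmul (csum (2 * K + 1) (fun i =>
       Cmul (Cmul (Cmul (Cexpi (IZR (idx K i) * (PI / 2))) (X (idx K i) (idx K j)))
                  (conjB_coef k0 R0 (idx K j)))
            (Cexpi (IZR (- idx K i) * theta Ns s))))
     (Cexpi (IZR (idx K j) * theta Nr r)))).
Proof.
  unfold Lop. rewrite Cmul_csum_l, csum_comm. apply csum_ext; intros j _.
  rewrite Cmul_csum_r, Cmul_csum_l. apply csum_ext; intros i _.
  unfold Aent, Bent, conjB_coef.
  replace (IZR (idx K i) * (PI / 2 - theta Ns s))
    with (IZR (idx K i) * (PI / 2) + IZR (- idx K i) * theta Ns s) by (rewrite opp_IZR; ring).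
  rewrite Cexpi_add, Cconj_Cmul, Cconj_Cexpi, Ropp_involutive.
  apply Cmul_rearrange.
Qed.

Lemma LFrob2_diag k0 R0 z0 K Ns Nr X :
  (2 * K + 1 <= Ns)%nat -> (2 * K + 1 <= Nr)%nat ->
  LFrob2 k0 R0 z0 K Ns Nr X = INR Ns * INR Nr *
    rsum (2 * K + 1) (fun i => rsum (2 * K + 1) (fun j =>
      Cmod2 (X (idx K i) (idx K j)) * Cmod2 (dcoef k0 R0 (idx K j)))).
Proof.
  intros HNs HNr. unfold LFrob2.
  set (c := fun s j => csum (2 * K + 1) (fun i =>
       Cmul (Cmul (Cmul (Cexpi (IZR (idx K i) * (PI / 2))) (X (idx K i) (idx K j)))
                  (conjB_coef k0 R0 (idx K j)))
            (Cexpi (IZR (- idx K i) * theta Ns s)))).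
  transitivity (rsum Ns (fun s => INR Nr * rsum (2 * K + 1) (fun j => Cmod2 (c s j)))).
  { apply rsum_ext; intros s _.
    rewrite <- (discrete_parseval Nr (2 * K + 1) (idx K) (c s))
      by (intros; unfold idx; lia).
    apply rsum_ext; intros r _. rewrite Lop_trig_poly, Cmod2_Cmul, Cmod2_Cexpi. unfold c. ring. }
  rewrite rsum_scal, rsum_comm.
  rewrite (rsum_ext (2 * K + 1) _ (fun j => INR Ns * rsum (2 * K + 1) (fun i =>
      Cmod2 (X (idx K i) (idx K j)) * Cmod2 (dcoef k0 R0 (idx K j))))).
  - rewrite rsum_scal, (rsum_comm (2 * K + 1) (2 * K + 1)). ring.
  - intros j _. unfold c.
    rewrite (discrete_parseval Ns (2 * K + 1) (fun i => (- idx K i)%Z))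
      by (intros; unfold idx; lia).
    f_equal. apply rsum_ext; intros i _.
    rewrite !Cmod2_Cmul, !Cmod2_Cexpi, Cmod2_conjB_coef. ring.
Qed.

Lemma rmax_upto_ge n f j : (j <= n)%nat -> f j <= rmax_upto n f.
Proof.
  revert j; induction n as [|n IH]; intros j Hj; simpl.
  - replace j with O by lia. lra.
  - destruct (Nat.eq_dec j (S n)) as [->|]; [apply Rmax_r|].
    eapply Rle_trans; [apply IH; lia | apply Rmax_l].
Qed.

Lemma rmin_upto_le n f j : (j <= n)%nat -> rmin_upto n f <= f j.
Proof.
  revert j; induction n as [|n IH]; intros j Hj; simpl.
  - replace j with O by lia. lra.
  - destruct (Nat.eq_dec j (S n)) as [->|]; [apply Rmin_r|].
    eapply Rle_trans; [apply Rmin_l | apply IH; lia].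
Qed.

Lemma rmax_upto_attained n f : exists j, (j <= n)%nat /\ rmax_upto n f = f j.
Proof.
  induction n as [|n [j [Hj E]]]; simpl; [exists O; auto|].
  unfold Rmax. destruct (Rle_dec (rmax_upto n f) (f (S n))).
  - exists (S n); auto.
  - exists j; split; auto.
Qed.

Lemma rmin_upto_attained n f : exists j, (j <= n)%nat /\ rmin_upto n f = f j.
Proof.
  induction n as [|n [j [Hj E]]]; simpl; [exists O; auto|].
  unfold Rmin. destruct (Rle_dec (rmin_upto n f) (f (S n))).
  - exists j; split; auto.
  - exists (S n); auto.
Qed.

Definition dmod (k0 R0 : R) (K j : nat) : R := Cmod (dcoef k0 R0 (idx K j)).

Lemma dmod_bounds k0 R0 K j :
  (j <= 2 * K)%nat -> dmin k0 R0 K <= dmod k0 R0 K j <= dmax k0 R0 K.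
Proof. intros Hj. split; [apply (rmin_upto_le (2 * K)) | apply (rmax_upto_ge (2 * K))]; exact Hj. Qed.

Lemma dmin_nonneg k0 R0 K : 0 <= dmin k0 R0 K.
Proof.
  destruct (rmin_upto_attained (2 * K) (dmod k0 R0 K)) as [j [_ E]].
  change (dmin k0 R0 K) with (rmin_upto (2 * K) (dmod k0 R0 K)). rewrite E. apply Cmod_nonneg.
Qed.

Definition wFrob2 (K : nat) (X : Z -> Z -> Cx) (w : nat -> R) : R :=
  rsum (2 * K + 1) (fun i => rsum (2 * K + 1) (fun j => Cmod2 (X (idx K i) (idx K j)) * w j)).

Lemma Frob2_nonneg K X : 0 <= Frob2 K X.
Proof. apply rsum_nonneg; intros; apply rsum_nonneg; intros; apply Cmod2_nonneg. Qed.

Lemma wFrob2_bounds K X w lo hi :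
  (forall j, (j <= 2 * K)%nat -> lo <= w j <= hi) ->
  lo * Frob2 K X <= wFrob2 K X w <= hi * Frob2 K X.
Proof.
  intros Hw. unfold wFrob2, Frob2. rewrite <- !rsum_scal.
  split; apply rsum_le; intros i _; rewrite <- rsum_scal; apply rsum_le; intros j Hj;
    pose proof (Cmod2_nonneg (X (idx K i) (idx K j))); destruct (Hw j); try lia; nra.
Qed.

Lemma sqrt_LFrob2 k0 R0 z0 K Ns Nr X :
  (2 * K + 1 <= Ns)%nat -> (2 * K + 1 <= Nr)%nat ->
  sqrt (LFrob2 k0 R0 z0 K Ns Nr X) =
  sqrt (INR Ns * INR Nr) * sqrt (wFrob2 K X (fun j => dmod k0 R0 K j * dmod k0 R0 K j)).
Proof.
  intros HNs HNr. rewrite LFrob2_diag by assumption. rewrite <- sqrt_mult.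
  - do 2 f_equal. unfold wFrob2, dmod.
    apply rsum_ext; intros; apply rsum_ext; intros. rewrite (Cmod2_Cmod (dcoef _ _ _)). reflexivity.
  - apply Rmult_le_pos; apply pos_INR.
  - apply rsum_nonneg; intros; apply rsum_nonneg; intros.
    apply Rmult_le_pos; [apply Cmod2_nonneg | apply Rle_0_sqr].
Qed.

Definition unit_mx (K j : nat) : Z -> Z -> Cx :=
  fun m n => if (Z.eqb m 0 && Z.eqb n (idx K j))%bool then (1, 0) else (0, 0).

Lemma wFrob2_unit_mx K j w : (j <= 2 * K)%nat -> wFrob2 K (unit_mx K j) w = w j.
Proof.
  intros Hj. unfold wFrob2. rewrite (rsum_single _ _ K) by
    (try lia; intros i _ Hi; apply rsum_zero; intros j' _; unfold unit_mx;
     replace (Z.eqb (idx K i) 0) with false by (symmetry; apply Z.eqb_neq; unfold idx; lia);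
     unfold Cmod2; simpl; ring).
  rewrite (rsum_single _ _ j) by
    (try lia; intros i _ Hi; unfold unit_mx;
     replace (Z.eqb (idx K i) (idx K j)) with false by (symmetry; apply Z.eqb_neq; unfold idx; lia);
     rewrite andb_false_r; unfold Cmod2; simpl; ring).
  unfold unit_mx. replace (Z.eqb (idx K K) 0) with true by (symmetry; apply Z.eqb_eq; unfold idx; lia).
  rewrite Z.eqb_refl. unfold Cmod2; simpl. ring.
Qed.

Section SingularValues.

Variables (k0 R0 : R) (z0 : R * R) (K Ns Nr : nat).
Hypotheses (HNs : (2 * K + 1 <= Ns)%nat) (HNr : (2 * K + 1 <= Nr)%nat).

Let a := sqrt (INR Ns * INR Nr).
Let E := quot_set k0 R0 z0 K Ns Nr.

Lemma quot_set_bounds v : E v -> a * dmin k0 R0 K <= v <= a * dmax k0 R0 K.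
Proof.
  intros [X [HX ->]]. rewrite sqrt_LFrob2 by assumption.
  assert (HF : 0 < Frob2 K X) by (destruct (Frob2_nonneg K X); [assumption | congruence]).
  assert (HsF : 0 < sqrt (Frob2 K X)) by (apply sqrt_lt_R0, HF).
  assert (Ha : 0 <= a) by apply sqrt_pos.
  pose proof (dmin_nonneg k0 R0 K) as Hmin.
  destruct (wFrob2_bounds K X (fun j => dmod k0 R0 K j * dmod k0 R0 K j)
              (dmin k0 R0 K * dmin k0 R0 K) (dmax k0 R0 K * dmax k0 R0 K)) as [Hlo Hhi].
  { intros j Hj. destruct (dmod_bounds k0 R0 K j Hj). split; apply Rmult_le_compat; lra. }
  assert (Hmax : 0 <= dmax k0 R0 K) by (destruct (dmod_bounds k0 R0 K O); lia || lra).
  unfold Rdiv. rewrite Rmult_assoc.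
  split; apply Rmult_le_compat_l; try exact Ha;
    apply Rmult_le_reg_r with (sqrt (Frob2 K X)); try exact HsF;
    rewrite Rmult_assoc, Rinv_l, Rmult_1_r by lra;
    [ rewrite <- (sqrt_square (dmin k0 R0 K)) by exact Hmin
    | rewrite <- (sqrt_square (dmax k0 R0 K)) by exact Hmax ];
    rewrite <- sqrt_mult by nra; apply sqrt_le_1_alt; lra.
Qed.

Lemma quot_set_unit_mx j : (j <= 2 * K)%nat -> E (a * dmod k0 R0 K j).
Proof.
  intros Hj. exists (unit_mx K j).
  assert (HF : Frob2 K (unit_mx K j) = 1).
  { rewrite <- (wFrob2_unit_mx K j (fun _ => 1) Hj). unfold wFrob2, Frob2.
    apply rsum_ext; intros; apply rsum_ext; intros; ring. }
  rewrite HF, sqrt_1, sqrt_LFrob2, wFrob2_unit_mx, sqrt_square by (auto; apply Cmod_nonneg).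
  split; [lra | unfold a; field].
Qed.

Lemma sigma_max_eq : sigma_max k0 R0 z0 K Ns Nr = a * dmax k0 R0 K.
Proof.
  assert (Hlub : is_lub E (a * dmax k0 R0 K)).
  { split; [intros v Hv; apply quot_set_bounds, Hv|].
    intros b Hb. apply Hb.
    destruct (rmax_upto_attained (2 * K) (dmod k0 R0 K)) as [j [Hj Ej]].
    change (dmax k0 R0 K) with (rmax_upto (2 * K) (dmod k0 R0 K)). rewrite Ej. apply quot_set_unit_mx, Hj. }
  apply (is_lub_u E); [unfold sigma_max; apply epsilon_spec; exists (a * dmax k0 R0 K) | ];
    exact Hlub.
Qed.

Lemma sigma_min_eq : sigma_min k0 R0 z0 K Ns Nr = a * dmin k0 R0 K.
Proof.
  assert (Hglb : is_glb E (a * dmin k0 R0 K)).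
  { split; [intros v Hv; apply quot_set_bounds, Hv|].
    intros b Hb. apply Hb.
    destruct (rmin_upto_attained (2 * K) (dmod k0 R0 K)) as [j [Hj Ej]].
    change (dmin k0 R0 K) with (rmin_upto (2 * K) (dmod k0 R0 K)). rewrite Ej. apply quot_set_unit_mx, Hj. }
  assert (Hspec : is_glb E (sigma_min k0 R0 z0 K Ns Nr))
    by (unfold sigma_min; apply epsilon_spec; exists (a * dmin k0 R0 K); exact Hglb).
  destruct Hglb as [Hlow Hgreat], Hspec as [Hlow' Hgreat'].
  apply Rle_antisym; [apply Hgreat | apply Hgreat']; assumption.
Qed.

(* When some d_n vanishes both sides are 0, since x / 0 = 0 in Rocq. *)
Lemma condL_eq : condL k0 R0 z0 K Ns Nr = dmax k0 R0 K / dmin k0 R0 K.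
Proof.
  assert (Ha : 0 < a) by (apply sqrt_lt_R0, Rmult_lt_0_compat; apply lt_0_INR; lia).
  unfold condL. rewrite sigma_max_eq, sigma_min_eq.
  destruct (Req_dec (dmin k0 R0 K) 0) as [->|Hnz].
  - rewrite Rmult_0_r, !Rdiv_0_r. reflexivity.
  - field. split; lra.
Qed.

End SingularValues.

Lemma series_value_eq a l : Un_cv (fun N => sum_f_R0 a N) l -> series_value a = l.
Proof.
  intros H. unfold series_value.
  apply (UL_sequence (fun N => sum_f_R0 a N)); [apply epsilon_spec; exists l |]; exact H.
Qed.

Lemma exp_series_cv t : Un_cv (fun N => sum_f_R0 (fun k => / INR (fact k) * t ^ k) N) (exp t).
Proof. unfold exp. destruct (exist_exp t) as [l Hl]. exact Hl. Qed.

(* Split a into the nonnegative series (|a| + a)/2 and (|a| - a)/2, both dominated by b. *)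
Lemma series_cv_dominated a b lb :
  (forall k, Rabs (a k) <= b k) -> Un_cv (fun N => sum_f_R0 b N) lb ->
  exists l, Un_cv (fun N => sum_f_R0 a N) l /\ Rabs l <= lb.
Proof.
  intros Hab Hb.
  assert (Hbx : {l : R | Un_cv (fun N => sum_f_R0 b N) l}) by (exists lb; exact Hb).
  assert (Hparts : forall k, 0 <= (Rabs (a k) + a k) / 2 <= b k /\ 0 <= (Rabs (a k) - a k) / 2 <= b k).
  { intros k. pose proof (Hab k). pose proof (Rle_abs (a k)). pose proof (Rle_abs (- a k)).
    rewrite Rabs_Ropp in *. lra. }
  destruct (Rseries_CV_comp (fun k => (Rabs (a k) + a k) / 2) b) as [l1 H1];
    [intros k; apply Hparts | exact Hbx |].
  destruct (Rseries_CV_comp (fun k => (Rabs (a k) - a k) / 2) b) as [l2 H2];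
    [intros k; apply Hparts | exact Hbx |].
  assert (Hc : Un_cv (fun N => sum_f_R0 a N) (l1 - l2)).
  { eapply Un_cv_ext; [|apply (CV_minus _ _ _ _ H1 H2)].
    intros N. simpl. rewrite <- minus_sum. apply sum_eq. intros. field. }
  exists (l1 - l2). split; [exact Hc|].
  apply (sum_cv_maj b (fun k _ => a k) 0 (l1 - l2) lb); auto.
Qed.

Lemma series_value_le_exp a B t :
  (forall k, Rabs (a k) <= B * (/ INR (fact k) * t ^ k)) -> Rabs (series_value a) <= B * exp t.
Proof.
  intros H.
  destruct (series_cv_dominated a (fun k => B * (/ INR (fact k) * t ^ k)) (B * exp t))
    as [l [Hl Hle]]; [exact H| |rewrite (series_value_eq a l Hl); exact Hle].
  eapply Un_cv_ext;
    [|apply (CV_mult (fun _ => B) (fun N => sum_f_R0 (fun k => / INR (fact k) * t ^ k) N));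
      [intros e He; exists O; intros; unfold Rdist; rewrite Rminus_diag, Rabs_R0; lra
      | apply exp_series_cv]].
  intros N. simpl. rewrite scal_sum. apply sum_eq. intros; ring.
Qed.

Lemma exp_partial_sum_le t n : 0 <= t -> rsum n (fun k => / INR (fact k) * t ^ k) <= exp t.
Proof.
  intros Ht. destruct n as [|n]; [simpl; pose proof (exp_pos t); lra|].
  rewrite rsum_sum_f_R0. apply growing_ineq; [|apply exp_series_cv].
  intros N. rewrite tech5.
  assert (0 <= / INR (fact (S N)) * t ^ S N).
  { apply Rmult_le_pos; [left; apply Rinv_0_lt_compat, INR_fact_lt_0 | apply pow_le, Ht]. }
  lra.
Qed.

Lemma inv_fact_pos_le_1 m : 0 < / INR (fact m) <= 1.
Proof.
  assert (1 <= INR (fact m)) by (apply (le_INR 1); pose proof (lt_O_fact m); lia).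
  split; [apply Rinv_0_lt_compat; lra | rewrite <- Rinv_1; apply Rinv_le_contravar; lra].
Qed.

Lemma INR_le_fact m : INR m <= INR (fact m).
Proof.
  apply le_INR. induction m as [|m IH]; simpl; [lia|]. pose proof (lt_O_fact m). nia.
Qed.

Lemma harmonic_bounds m : 0 <= harmonic m <= INR m.
Proof.
  induction m as [|m IH]; unfold harmonic in *; cbn [rsum]; [simpl; lra|].
  assert (0 < / INR (S m) <= 1).
  { split; [apply Rinv_0_lt_compat, lt_0_INR; lia|].
    rewrite <- Rinv_1. apply Rinv_le_contravar; [lra | apply (le_INR 1); lia]. }
  pose proof (S_INR m). lra.
Qed.

Lemma BesselJ_bound n x : 0 < x -> Rabs (BesselJ n x) <= (x / 2) ^ n * exp (x ^ 2 / 4).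
Proof.
  intros Hx. apply series_value_le_exp. intros k.
  pose proof (inv_fact_pos_le_1 k). pose proof (inv_fact_pos_le_1 (n + k)).
  assert (Hterm : (-1) ^ k / (INR (fact k) * INR (fact (n + k))) * (x / 2) ^ (2 * k + n) =
     (-1) ^ k * (((x / 2) ^ n * (/ INR (fact k) * (x ^ 2 / 4) ^ k)) * / INR (fact (n + k)))).
  { rewrite pow_add, pow_mult. replace ((x / 2) ^ 2) with (x ^ 2 / 4) by field.
    field. split; apply not_0_INR, fact_neq_0. }
  assert (0 <= (x / 2) ^ n * (/ INR (fact k) * (x ^ 2 / 4) ^ k)).
  { apply Rmult_le_pos; [apply pow_le; lra | apply Rmult_le_pos; [lra | apply pow_le; nra]]. }
  rewrite Hterm, Rabs_mult, pow_1_abs, Rmult_1_l, Rabs_pos_eq by (apply Rmult_le_pos; lra).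
  nra.
Qed.

Lemma BesselY_series_bound n x :
  Rabs (series_value (fun k => (psi1 k + psi1 (n + k)) * (- (x ^ 2 / 4)) ^ k
                               / (INR (fact k) * INR (fact (n + k)))))
  <= (2 + 2 * Rabs euler_gamma) * exp (x ^ 2 / 4).
Proof.
  apply series_value_le_exp. intros k.
  pose proof (inv_fact_pos_le_1 k). pose proof (inv_fact_pos_le_1 (n + k)).
  assert (Hterm : (psi1 k + psi1 (n + k)) * (- (x ^ 2 / 4)) ^ k / (INR (fact k) * INR (fact (n + k))) =
    ((-1) ^ k * (/ INR (fact k) * (x ^ 2 / 4) ^ k)) * ((psi1 k + psi1 (n + k)) * / INR (fact (n + k)))).
  { replace (- (x ^ 2 / 4)) with ((-1) * (x ^ 2 / 4)) by ring. rewrite Rpow_mult_distr.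
    field. split; apply not_0_INR, fact_neq_0. }
  assert (Hpow : 0 <= / INR (fact k) * (x ^ 2 / 4) ^ k)
    by (apply Rmult_le_pos; [lra | apply pow_le; nra]).
  rewrite Hterm, Rabs_mult, Rabs_mult, pow_1_abs, Rmult_1_l, (Rabs_pos_eq (/ INR (fact k) * _)) by exact Hpow.
  rewrite Rmult_comm. apply Rmult_le_compat_r; [exact Hpow|].
  unfold psi1. pose proof (harmonic_bounds k). pose proof (harmonic_bounds (n + k)).
  pose proof (Rabs_pos euler_gamma). pose proof (le_INR k (n + k) ltac:(lia)).
  rewrite Rabs_mult, (Rabs_pos_eq (/ INR (fact (n + k)))) by lra.
  assert (Hpsi : Rabs (harmonic k - euler_gamma + (harmonic (n + k) - euler_gamma))
                 <= 2 * INR (n + k) + 2 * Rabs euler_gamma).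
  { assert (Hab : forall h, 0 <= h -> Rabs (h - euler_gamma) <= h + Rabs euler_gamma)
      by (intros h Hh; unfold Rabs; repeat destruct Rcase_abs; lra).
    eapply Rle_trans; [apply Rabs_triang|].
    pose proof (Hab (harmonic k) ltac:(lra)). pose proof (Hab (harmonic (n + k)) ltac:(lra)).
    lra. }
  assert (Hfact : INR (n + k) * / INR (fact (n + k)) <= 1).
  { pose proof (INR_le_fact (n + k)). pose proof (INR_fact_lt_0 (n + k)).
    apply Rmult_le_reg_r with (INR (fact (n + k))); [lra|].
    rewrite Rmult_assoc, Rinv_l, Rmult_1_r, Rmult_1_l; lra. }
  pose proof (Rabs_pos (harmonic k - euler_gamma + (harmonic (n + k) - euler_gamma))).
  nra.
Qed.

(* The finite sum in the definition of Y_n, which dominates it for large n. *)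
Definition BesselY_head (n : nat) (x : R) : R :=
  rsum n (fun k => INR (fact (n - k - 1)) / INR (fact k) * (x ^ 2 / 4) ^ k).

Lemma BesselY_head_le n x : BesselY_head n x <= INR (fact (n - 1)) * exp (x ^ 2 / 4).
Proof.
  eapply Rle_trans; [|apply Rmult_le_compat_l; [apply pos_INR | apply (exp_partial_sum_le _ n); nra]].
  rewrite <- rsum_scal. apply rsum_le; intros k Hk.
  assert (INR (fact (n - k - 1)) <= INR (fact (n - 1))) by (apply le_INR, fact_le; lia).
  assert (0 <= / INR (fact k) * (x ^ 2 / 4) ^ k).
  { apply Rmult_le_pos; [left; apply Rinv_0_lt_compat, INR_fact_lt_0 | apply pow_le; nra]. }
  unfold Rdiv. rewrite Rmult_assoc. apply Rmult_le_compat_r; assumption.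
Qed.

Lemma BesselY_head_ge n x : (1 <= n)%nat -> INR (fact (n - 1)) <= BesselY_head n x.
Proof.
  intros Hn. unfold BesselY_head.
  eapply Rle_trans; [|apply (rsum_term_le n _ O); [lia|]].
  - simpl. replace (n - 0 - 1)%nat with (n - 1)%nat by lia. lra.
  - intros k _. apply Rmult_le_pos; [|apply pow_le; nra].
    apply Rmult_le_pos; [apply pos_INR | left; apply Rinv_0_lt_compat, INR_fact_lt_0].
Qed.

Lemma BesselY_head_approx x : 0 < x -> exists W, 0 <= W /\ forall n,
  Rabs (BesselY n x + / PI * / (x / 2) ^ n * BesselY_head n x) <= W * (x / 2) ^ n.
Proof.
  intros Hx. pose proof PI_RGT_0. pose proof (Rinv_0_lt_compat PI ltac:(lra)).
  set (E := exp (x ^ 2 / 4)). assert (0 < E) by apply exp_pos.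
  exists ((2 / PI * Rabs (ln (x / 2)) + / PI * (2 + 2 * Rabs euler_gamma)) * E).
  split; [apply Rmult_le_pos; [pose proof (Rabs_pos (ln (x / 2)));
    pose proof (Rabs_pos euler_gamma); unfold Rdiv; nra | lra]|].
  intros n. unfold BesselY. fold (BesselY_head n x).
  set (G := series_value _). set (y := x / 2).
  pose proof (BesselJ_bound n x Hx) as HJ. pose proof (BesselY_series_bound n x) as HG.
  fold E y G in HJ, HG.
  assert (Hy : 0 < y ^ n) by (apply pow_lt; unfold y; lra).
  replace (- / PI * / y ^ n * BesselY_head n x + 2 / PI * ln y * BesselJ n x - y ^ n / PI * G
           + / PI * / y ^ n * BesselY_head n x)
    with ((2 / PI * ln y) * BesselJ n x + (- (y ^ n / PI)) * G) by ring.
  eapply Rle_trans; [apply Rabs_triang|]. unfold Rdiv.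
  rewrite !Rabs_mult, Rabs_Ropp, !Rabs_mult.
  rewrite (Rabs_pos_eq 2), (Rabs_pos_eq (y ^ n)), (Rabs_pos_eq (/ PI)) by lra.
  pose proof (Rabs_pos (ln y)).
  assert (2 * / PI * Rabs (ln y) * Rabs (BesselJ n x) <= 2 * / PI * Rabs (ln y) * (y ^ n * E))
    by (apply Rmult_le_compat_l; [apply Rmult_le_pos; lra | exact HJ]).
  assert (y ^ n * / PI * Rabs G <= y ^ n * / PI * ((2 + 2 * Rabs euler_gamma) * E))
    by (apply Rmult_le_compat_l; [apply Rmult_le_pos; lra | exact HG]).
  lra.
Qed.

Definition Hmod (n : nat) (x : R) : R := Cmod (BesselJ n x, BesselY n x).

Lemma Cmod_le_abs_add a b : Cmod (a, b) <= Rabs a + Rabs b.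
Proof.
  unfold Cmod, Cmod2; cbn [fst snd]. pose proof (Rabs_pos a). pose proof (Rabs_pos b).
  rewrite <- (sqrt_square (Rabs a + Rabs b)) by lra.
  apply sqrt_le_1_alt. rewrite <- (pow2_abs a), <- (pow2_abs b). nra.
Qed.

Lemma Cmod_ge_abs_snd a b : Rabs b <= Cmod (a, b).
Proof.
  unfold Cmod, Cmod2; cbn [fst snd]. rewrite <- (sqrt_square (Rabs b)) by apply Rabs_pos.
  apply sqrt_le_1_alt. rewrite <- (pow2_abs b). nra.
Qed.

Lemma Hmod_upper x : 0 < x -> exists Q, 0 < Q /\ forall n,
  Hmod n x <= Q * (INR (fact (n - 1)) / (x / 2) ^ n + (x / 2) ^ n).
Proof.
  intros Hx. destruct (BesselY_head_approx x Hx) as [W [HW HY]].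
  pose proof PI_RGT_0. pose proof (Rinv_0_lt_compat PI ltac:(lra)).
  set (E := exp (x ^ 2 / 4)). assert (0 < E) by apply exp_pos.
  exists ((1 + / PI) * E + W). split; [nra|]. intros n.
  set (y := x / 2). set (f := INR (fact (n - 1))).
  assert (Hy : 0 < y ^ n) by (apply pow_lt; unfold y; lra).
  assert (Hv : 0 <= f / y ^ n) by (apply Rmult_le_pos; [apply pos_INR | left; apply Rinv_0_lt_compat, Hy]).
  pose proof (BesselJ_bound n x Hx) as HJ. fold E y in HJ.
  assert (HY' : Rabs (BesselY n x) <= W * y ^ n + / PI * E * (f / y ^ n)).
  { pose proof (HY n) as Hn. fold y in Hn.
    pose proof (BesselY_head_le n x) as Hh. fold E f in Hh.
    assert (0 <= / PI * / y ^ n * BesselY_head n x).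
    { pose proof (BesselY_head_ge n x). apply Rmult_le_pos;
        [apply Rmult_le_pos; [lra | left; apply Rinv_0_lt_compat, Hy]|].
      unfold BesselY_head. apply rsum_nonneg; intros k _. apply Rmult_le_pos; [|apply pow_le; nra].
      apply Rmult_le_pos; [apply pos_INR | left; apply Rinv_0_lt_compat, INR_fact_lt_0]. }
    assert (/ PI * / y ^ n * BesselY_head n x <= / PI * E * (f / y ^ n)).
    { unfold Rdiv. replace (/ PI * E * (f * / y ^ n)) with (/ PI * / y ^ n * (f * E)) by ring.
      apply Rmult_le_compat_l; [|lra]. apply Rmult_le_pos; [lra | left; apply Rinv_0_lt_compat, Hy]. }
    pose proof (Rabs_triang (BesselY n x + / PI * / y ^ n * BesselY_head n x)
                            (- (/ PI * / y ^ n * BesselY_head n x))) as T.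
    rewrite Rabs_Ropp, (Rabs_pos_eq (/ PI * / y ^ n * _)) in T by assumption.
    replace (BesselY n x + / PI * / y ^ n * BesselY_head n x + - (/ PI * / y ^ n * BesselY_head n x))
      with (BesselY n x) in T by ring.
    lra. }
  unfold Hmod. eapply Rle_trans; [apply Cmod_le_abs_add|].
  assert (0 <= E * (f / y ^ n)) by nra. assert (0 <= W * (f / y ^ n)) by nra.
  assert (0 <= / PI * E * y ^ n) by (apply Rmult_le_pos; nra).
  nra.
Qed.

Lemma Hmod_lower x : 0 < x -> exists W, 0 <= W /\ forall n, (1 <= n)%nat ->
  / PI * (INR (fact (n - 1)) / (x / 2) ^ n) - W * (x / 2) ^ n <= Hmod n x.
Proof.
  intros Hx. destruct (BesselY_head_approx x Hx) as [W [HW HY]].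
  exists W. split; [exact HW|]. intros n Hn.
  pose proof PI_RGT_0. pose proof (Rinv_0_lt_compat PI ltac:(lra)).
  assert (Hy : 0 < (x / 2) ^ n) by (apply pow_lt; lra).
  pose proof (Rinv_0_lt_compat _ Hy).
  assert (/ PI * / (x / 2) ^ n * INR (fact (n - 1)) <= / PI * / (x / 2) ^ n * BesselY_head n x)
    by (apply Rmult_le_compat_l; [nra | apply BesselY_head_ge, Hn]).
  pose proof (Rabs_triang (BesselY n x + / PI * / (x / 2) ^ n * BesselY_head n x) (- BesselY n x)) as T.
  rewrite Rabs_Ropp in T.
  replace (BesselY n x + / PI * / (x / 2) ^ n * BesselY_head n x + - BesselY n x)
    with (/ PI * / (x / 2) ^ n * BesselY_head n x) in T by ring.
  pose proof (Rle_abs (/ PI * / (x / 2) ^ n * BesselY_head n x)).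
  pose proof (HY n). pose proof (Cmod_ge_abs_snd (BesselJ n x) (BesselY n x)).
  unfold Hmod, Rdiv. lra.
Qed.

Lemma exp_pow_INR n a : exp (INR n * a) = exp a ^ n.
Proof.
  induction n as [|n IH]; [simpl; rewrite Rmult_0_l, exp_0; reflexivity|].
  rewrite S_INR, Rmult_plus_distr_r, Rmult_1_l, exp_plus, IH. simpl. ring.
Qed.

Lemma exp_1_le_pow_succ K : (1 <= K)%nat -> exp 1 <= ((INR K + 1) / INR K) ^ S K.
Proof.
  intros HK. assert (HK' : 1 <= INR K) by (apply (le_INR 1); exact HK).
  set (t := / (INR K + 1)).
  assert (Ht : exp t <= (INR K + 1) / INR K).
  { pose proof (exp_ineq1_le (- t)) as H. rewrite exp_Ropp in H.
    replace (1 + - t) with (INR K / (INR K + 1)) in H by (unfold t; field; lra).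
    assert (Hpos : 0 < INR K / (INR K + 1)) by (apply Rdiv_lt_0_compat; lra).
    pose proof (Rinv_le_contravar _ _ Hpos H) as H'.
    rewrite Rinv_inv in H'. replace ((INR K + 1) / INR K) with (/ (INR K / (INR K + 1)))
      by (field; lra). exact H'. }
  replace (exp 1) with (exp t ^ S K)
    by (rewrite <- exp_pow_INR; f_equal; unfold t; rewrite S_INR; field; lra).
  apply pow_incr. split; [left; apply exp_pos | exact Ht].
Qed.

Lemma fact_le_stirling K : INR (fact K) <= exp 1 * (INR (S K) / exp 1) ^ S K.
Proof.
  pose proof (exp_pos 1) as He.
  induction K as [|K IH]; [simpl; field_simplify; lra|].
  change (fact (S K)) with (S K * fact K)%nat. rewrite mult_INR.
  set (k := INR (S K)) in *. assert (Hk : 1 <= k) by (unfold k; apply (le_INR 1); lia).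
  replace (INR (S (S K))) with (k + 1) by (unfold k; rewrite !S_INR; ring).
  pose proof (exp_1_le_pow_succ (S K) ltac:(lia)) as Hstep. fold k in Hstep.
  assert (Hpow : 0 < (k / exp 1) ^ S K) by (apply pow_lt, Rdiv_lt_0_compat; lra).
  replace (exp 1 * ((k + 1) / exp 1) ^ S (S K))
    with (((k + 1) / k) ^ S (S K) * ((k / exp 1) ^ S K * k))
    by (replace ((k + 1) / exp 1) with ((k + 1) / k * (k / exp 1)) by (field; lra);
        rewrite Rpow_mult_distr; simpl; field; lra).
  eapply Rle_trans; [apply Rmult_le_compat_l; [lra | exact IH]|].
  replace (k * (exp 1 * (k / exp 1) ^ S K)) with (exp 1 * ((k / exp 1) ^ S K * k)) by ring.
  apply Rmult_le_compat_r; [nra | exact Hstep].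
Qed.

Lemma fact_pred_le_stirling K : (1 <= K)%nat -> INR (fact (K - 1)) <= exp 1 * (INR K / exp 1) ^ K.
Proof.
  intros HK. destruct K as [|K]; [lia|].
  replace (S K - 1)%nat with K by lia. apply fact_le_stirling.
Qed.

Lemma INR_le_pow_2 m : INR m <= 2 ^ m.
Proof.
  induction m as [|m IH]; [simpl; lra|].
  rewrite S_INR. simpl. pose proof (pow_R1_Rle 2 m ltac:(lra)). lra.
Qed.

(* From m! / (2 q)^m -> 0 and m <= 2^m. *)
Lemma pow_le_fact_pred_eventually M q : 0 < q ->
  exists N, forall m, (N <= m)%nat -> M * q ^ m <= INR (fact (m - 1)).
Proof.
  intros Hq. pose proof (Rabs_pos M) as HM.
  destruct (cv_speed_pow_fact (2 * q) (/ (Rabs M + 1))) as [N HN];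
    [apply Rinv_0_lt_compat; lra|].
  exists (S N). intros m Hm. destruct m as [|m]; [lia|].
  specialize (HN (S m) ltac:(lia)). unfold Rdist in HN. rewrite Rminus_0_r in HN.
  replace (S m - 1)%nat with m by lia.
  assert (Hf : 0 < INR (fact (S m))) by apply INR_fact_lt_0.
  assert (Hqm : 0 < q ^ S m) by (apply pow_lt; lra).
  rewrite Rabs_pos_eq in HN by (apply Rlt_le, Rdiv_lt_0_compat; [apply pow_lt|]; lra).
  assert (Hlt : (Rabs M + 1) * (2 * q) ^ S m < INR (fact (S m))).
  { apply Rmult_lt_reg_r with (/ (Rabs M + 1) * / INR (fact (S m)));
      [apply Rmult_lt_0_compat; apply Rinv_0_lt_compat; lra|].
    replace ((Rabs M + 1) * (2 * q) ^ S m * (/ (Rabs M + 1) * / INR (fact (S m))))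
      with ((2 * q) ^ S m / INR (fact (S m))) by (field; lra).
    replace (INR (fact (S m)) * (/ (Rabs M + 1) * / INR (fact (S m)))) with (/ (Rabs M + 1))
      by (field; lra).
    exact HN. }
  change (fact (S m)) with (S m * fact m)%nat in Hlt. rewrite mult_INR, Rpow_mult_distr in Hlt.
  pose proof (INR_le_pow_2 (S m)). assert (0 < INR (S m)) by (apply lt_0_INR; lia).
  assert (M * q ^ S m <= Rabs M * q ^ S m) by (apply Rmult_le_compat_r; [lra | apply Rle_abs]).
  assert (Rabs M * INR (S m) * q ^ S m <= (Rabs M + 1) * (2 ^ S m * q ^ S m)).
  { rewrite <- Rmult_assoc. apply Rmult_le_compat_r; [lra|]. apply Rmult_le_compat; lra. }
  assert (Hscaled : INR (S m) * (Rabs M * q ^ S m) <= INR (S m) * INR (fact m)) by nra.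
  apply Rmult_le_reg_l in Hscaled; lra.
Qed.

Lemma le_rsum_prefix_add (f : nat -> R) (m0 : nat) :
  (forall n, 0 <= f n) -> (forall n, (m0 <= n)%nat -> f n <= f (S n)) ->
  forall K n, (m0 <= K)%nat -> (n <= K)%nat -> f n <= rsum (S m0) f + f K.
Proof.
  intros Hpos Hincr K n HK Hn.
  assert (Hmono : forall p, (m0 <= p)%nat -> forall q, (p <= q)%nat -> f p <= f q).
  { intros p Hp q Hpq. induction Hpq as [|q Hpq IH]; [lra|].
    eapply Rle_trans; [exact IH | apply Hincr; lia]. }
  destruct (le_lt_dec n m0).
  - pose proof (rsum_term_le (S m0) f n ltac:(lia) ltac:(intros; apply Hpos)). pose proof (Hpos K). lra.
  - pose proof (Hmono n ltac:(lia) K Hn). pose proof (rsum_nonneg (S m0) f ltac:(intros; apply Hpos)).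
    lra.
Qed.

Lemma fact_pred_div_pow_le_succ y n : 0 < y -> y <= INR n ->
  INR (fact (n - 1)) / y ^ n <= INR (fact (S n - 1)) / y ^ S n.
Proof.
  intros Hy Hn. destruct n as [|n]; [simpl in Hn; lra|].
  replace (S (S n) - 1)%nat with (S n) by lia. replace (S n - 1)%nat with n by lia.
  change (fact (S n)) with (S n * fact n)%nat. rewrite mult_INR.
  assert (0 < y ^ S n) by (apply pow_lt, Hy). pose proof (pos_INR (fact n)).
  change (y ^ S (S n)) with (y * y ^ S n).
  apply Rmult_le_reg_r with (y * y ^ S n); [nra|].
  field_simplify; [nra | lra | lra].
Qed.

Lemma pow_le_1_add_pow y n K : 0 <= y -> (n <= K)%nat -> y ^ n <= 1 + y ^ K.
Proof.
  intros Hy Hn. pose proof (pow_le y K Hy). destruct (Rle_dec y 1).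
  - pose proof (pow_incr y 1 n ltac:(lra)). rewrite pow1 in *. lra.
  - pose proof (Rle_pow y n K ltac:(lra) Hn). lra.
Qed.

Lemma Hmod_le_uniform x : 0 < x -> exists A N, 0 < A /\ forall K n, (N <= K)%nat -> (n <= K)%nat ->
  Hmod n x <= A * (1 + INR (fact (K - 1)) / (x / 2) ^ K + (x / 2) ^ K).
Proof.
  intros Hx. destruct (Hmod_upper x Hx) as [Q [HQ Hup]].
  set (y := x / 2) in *. assert (Hy : 0 < y) by (unfold y; lra).
  set (v := fun n => INR (fact (n - 1)) / y ^ n).
  assert (Hv : forall n, 0 <= v n).
  { intros n. apply Rmult_le_pos; [apply pos_INR | left; apply Rinv_0_lt_compat, pow_lt, Hy]. }
  destruct (INR_unbounded y) as [m0 Hm0].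
  pose proof (le_rsum_prefix_add v m0 Hv) as Hpre.
  exists (Q * (rsum (S m0) v + 1)), m0. split.
  { pose proof (rsum_nonneg (S m0) v ltac:(intros; apply Hv)). nra. }
  intros K n HK Hn.
  assert (Hvn : v n <= rsum (S m0) v + v K).
  { apply Hpre; [|assumption..]. intros p Hp. apply fact_pred_div_pow_le_succ; [exact Hy|].
    pose proof (le_INR _ _ Hp). lra. }
  pose proof (pow_le_1_add_pow y n K ltac:(lra) Hn) as Hyn.
  pose proof (rsum_nonneg (S m0) v ltac:(intros; apply Hv)). pose proof (Hv K).
  pose proof (pow_le y K ltac:(lra)).
  change (INR (fact (K - 1)) / y ^ K) with (v K).
  apply Rle_trans with (Q * (v n + y ^ n)); [apply Hup|].
  assert (v n + y ^ n <= (rsum (S m0) v + 1) * (1 + v K + y ^ K)) by nra.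
  rewrite Rmult_assoc. apply Rmult_le_compat_l; lra.
Qed.

Lemma Hmod_eventually_ge_1 x : 0 < x -> exists N, forall n, (N <= n)%nat -> 1 <= Hmod n x.
Proof.
  intros Hx. destruct (Hmod_lower x Hx) as [W [HW Hlow]].
  pose proof PI_RGT_0. set (y := x / 2) in *. assert (Hy : 0 < y) by (unfold y; lra).
  set (s := Rmax 1 y). assert (Hs1 : 1 <= s) by apply Rmax_l. assert (Hsy : y <= s) by apply Rmax_r.
  destruct (pow_le_fact_pred_eventually (PI * (1 + W)) (s ^ 2) ltac:(apply pow_lt; lra)) as [N HN].
  exists (S N). intros n Hn.
  pose proof (Hlow n ltac:(lia)) as HL. pose proof (HN n ltac:(lia)) as HF.
  rewrite <- pow_mult, Nat.mul_comm, pow_mult in HF.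
  assert (Hsn : 1 <= s ^ n) by (apply pow_R1_Rle, Hs1).
  assert (Hysn : y ^ n <= s ^ n) by (apply pow_incr; lra).
  assert (Hyn : 0 < y ^ n) by (apply pow_lt, Hy).
  set (f := INR (fact (n - 1))) in *.
  assert (Hf1 : f / s ^ n <= f / y ^ n).
  { apply Rmult_le_compat_l; [apply pos_INR | apply Rinv_le_contravar; lra]. }
  assert (Hf2 : PI * (1 + W) * s ^ n <= f / s ^ n).
  { apply Rmult_le_reg_r with (s ^ n); [lra|].
    unfold Rdiv. rewrite (Rmult_assoc f), Rinv_l, Rmult_1_r by lra. nra. }
  assert (Hf3 : (1 + W) * s ^ n <= / PI * (f / y ^ n)).
  { replace ((1 + W) * s ^ n) with (/ PI * (PI * (1 + W) * s ^ n)) by (field; lra).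
    apply Rmult_le_compat_l; [left; apply Rinv_0_lt_compat|]; lra. }
  assert (W * y ^ n <= W * s ^ n) by (apply Rmult_le_compat_l; lra).
  lra.
Qed.

Lemma Hmod_zero_or_bounded_below x : 0 < x ->
  (exists m, Hmod m x = 0) \/ exists c, 0 < c /\ forall m, c <= Hmod m x.
Proof.
  intros Hx. destruct (classic (exists m, Hmod m x = 0)) as [Hz | Hnz]; [left; exact Hz | right].
  destruct (Hmod_eventually_ge_1 x Hx) as [N HN].
  set (c := rmin_upto N (fun m => Rmin 1 (Hmod m x))).
  exists c. split.
  - destruct (rmin_upto_attained N (fun m => Rmin 1 (Hmod m x))) as [j [_ Ej]].
    unfold c. rewrite Ej. apply Rmin_glb_lt; [lra|].
    destruct (Cmod_nonneg (BesselJ j x, BesselY j x)) as [|Hj]; [assumption|].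
    exfalso. apply Hnz. exists j. symmetry. exact Hj.
  - intros m. destruct (le_lt_dec m N) as [Hm | Hm].
    + eapply Rle_trans; [apply (rmin_upto_le N _ m Hm) | apply Rmin_r].
    + eapply Rle_trans; [apply (rmin_upto_le N _ N (le_n N)) | ].
      pose proof (HN m ltac:(lia)). pose proof (Rmin_l 1 (Hmod N x)). simpl in *. lra.
Qed.

Lemma Cmod_dcoef k0 R0 n : Cmod (dcoef k0 R0 n) = Hmod (Z.abs_nat n) (k0 * R0) / 4.
Proof.
  unfold dcoef. rewrite Cmod_Cmul.
  replace (Cmod (0, / 4)) with (/ 4)
    by (unfold Cmod, Cmod2; cbn [fst snd]; replace (0 ^ 2 + (/ 4) ^ 2) with (/ 4 * / 4) by ring;
        symmetry; apply sqrt_square; lra).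
  unfold Hankel1, Hmod. destruct (n <? 0)%Z; [|field].
  set (c := (-1) ^ Z.abs_nat n).
  assert (Hc : c ^ 2 = 1).
  { unfold c. rewrite <- pow_mult, Nat.mul_comm, pow_mult. replace ((-1) ^ 2) with 1 by ring. apply pow1. }
  unfold Cmod, Cscal, Cmod2. cbn [fst snd]. rewrite !Rpow_mult_distr, Hc, !Rmult_1_l. field.
Qed.

Lemma dmod_Hmod k0 R0 K j : dmod k0 R0 K j = Hmod (Z.abs_nat (idx K j)) (k0 * R0) / 4.
Proof. apply Cmod_dcoef. Qed.

Lemma dmin_ge k0 R0 K c : (forall m, c <= Hmod m (k0 * R0)) -> c / 4 <= dmin k0 R0 K.
Proof.
  intros Hc. destruct (rmin_upto_attained (2 * K) (dmod k0 R0 K)) as [j [_ Ej]].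
  change (dmin k0 R0 K) with (rmin_upto (2 * K) (dmod k0 R0 K)).
  rewrite Ej, dmod_Hmod. pose proof (Hc (Z.abs_nat (idx K j))). lra.
Qed.

Lemma dmin_eq_0 k0 R0 K m : (m <= K)%nat -> Hmod m (k0 * R0) = 0 -> dmin k0 R0 K = 0.
Proof.
  intros Hm Hz. apply Rle_antisym; [|apply dmin_nonneg].
  eapply Rle_trans; [apply (rmin_upto_le (2 * K) (dmod k0 R0 K) (K + m)); lia|].
  rewrite dmod_Hmod. unfold idx.
  replace (Z.of_nat (K + m) - Z.of_nat K)%Z with (Z.of_nat m) by lia.
  rewrite Zabs2Nat.id, Hz. lra.
Qed.

Lemma dmax_nonneg k0 R0 K : 0 <= dmax k0 R0 K.
Proof. eapply Rle_trans; [apply Cmod_nonneg | apply (rmax_upto_ge (2 * K) (dmod k0 R0 K) O); lia]. Qed.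

Lemma dmax_le_CR_pow k0 R0 : 0 < k0 -> 0 < R0 -> exists A K1, 0 < A /\
  forall K, (K1 <= K)%nat ->
    1 <= (C_R k0 R0 * INR K) ^ K /\ dmax k0 R0 K <= A * (C_R k0 R0 * INR K) ^ K.
Proof.
  intros Hk0 HR0. set (x := k0 * R0). assert (Hx : 0 < x) by (unfold x; nra).
  destruct (Hmod_le_uniform x Hx) as [A [N [HA Hup]]].
  set (y := x / 2) in *. assert (Hy : 0 < y) by (unfold y; lra).
  pose proof (exp_pos 1) as He. assert (He1 : 1 <= exp 1) by (pose proof (exp_ineq1_le 1); lra).
  destruct (INR_unbounded (exp 1 * y * (1 + y) + INR N + 1)) as [K1 HK1].
  exists (A * (2 + exp 1) / 4), K1. split; [apply Rdiv_lt_0_compat; nra|].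
  intros K HK. apply le_INR in HK. pose proof (pos_INR N) as HN0.
  assert (HCR : C_R k0 R0 * INR K = INR K / exp 1 / y) by (unfold C_R, y, x; field; lra).
  assert (Hey : 0 <= exp 1 * y * (1 + y)) by (apply Rmult_le_pos; nra).
  assert (HKy : 1 + y <= C_R k0 R0 * INR K).
  { rewrite HCR. apply Rmult_le_reg_r with (exp 1 * y); [nra|].
    unfold Rdiv. rewrite !Rmult_assoc, <- (Rmult_assoc (/ y)), (Rmult_comm (/ y)), Rmult_assoc,
      Rinv_l, Rmult_1_r, Rinv_l, Rmult_1_r by lra. nra. }
  set (P := (C_R k0 R0 * INR K) ^ K).
  assert (HP1 : 1 <= P) by (apply pow_R1_Rle; lra).
  assert (HyP : y ^ K <= P) by (apply pow_incr; lra).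
  assert (HvP : INR (fact (K - 1)) / y ^ K <= exp 1 * P).
  { unfold P. rewrite HCR. unfold Rdiv at 2. rewrite Rpow_mult_distr, pow_inv.
    pose proof (Rinv_0_lt_compat _ (pow_lt y K Hy)).
    rewrite <- Rmult_assoc. apply Rmult_le_compat_r; [lra|].
    apply fact_pred_le_stirling, INR_le. simpl. lra. }
  split; [exact HP1|].
  destruct (rmax_upto_attained (2 * K) (dmod k0 R0 K)) as [j [Hj Ej]].
  change (dmax k0 R0 K) with (rmax_upto (2 * K) (dmod k0 R0 K)).
  rewrite Ej, dmod_Hmod. fold x.
  pose proof (Hup K (Z.abs_nat (idx K j)) ltac:(apply INR_le; lra)
                ltac:(unfold idx; lia)).
  assert (1 + INR (fact (K - 1)) / y ^ K + y ^ K <= (2 + exp 1) * P) by lra.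
  assert (A * (1 + INR (fact (K - 1)) / y ^ K + y ^ K) <= A * ((2 + exp 1) * P))
    by (apply Rmult_le_compat_l; lra).
  lra.
Qed.

Theorem mainTheorem8 :
  forall k0 R0 : R, 0 < k0 -> 0 < R0 ->
  exists C : R, 0 < C /\
  exists K0 : nat, forall K : nat, (K0 <= K)%nat ->
  forall (Ns Nr : nat) (z0 : R * R),
    (2 * K + 1 <= Ns)%nat -> (2 * K + 1 <= Nr)%nat ->
    condL k0 R0 z0 K Ns Nr = dmax k0 R0 K / dmin k0 R0 K /\
    dmax k0 R0 K / dmin k0 R0 K <= C * (C_R k0 R0 * INR K) ^ K.
Proof.
  intros k0 R0 Hk0 HR0.
  destruct (dmax_le_CR_pow k0 R0 Hk0 HR0) as [A [K1 [HA Hmax]]].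
  destruct (Hmod_zero_or_bounded_below (k0 * R0) ltac:(nra)) as [[m Hm] | [c [Hc Hmin]]].
  - (* Cannot happen (J_m and Y_m have no common zero), but then dmax / 0 = 0 in Rocq. *)
    exists 1. split; [lra|]. exists (Nat.max K1 m). intros K HK Ns Nr z0 HNs HNr.
    split; [apply condL_eq; assumption|].
    rewrite (dmin_eq_0 k0 R0 K m), Rdiv_0_r by (lia || exact Hm).
    destruct (Hmax K ltac:(lia)). lra.
  - exists (4 * A / c). split; [apply Rdiv_lt_0_compat; lra|].
    exists K1. intros K HK Ns Nr z0 HNs HNr.
    split; [apply condL_eq; assumption|].
    destruct (Hmax K HK) as [HP HdK]. pose proof (dmin_ge k0 R0 K c Hmin).
    pose proof (dmax_nonneg k0 R0 K).
    apply Rle_trans with (dmax k0 R0 K / (c / 4)).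
    + apply Rmult_le_compat_l; [lra | apply Rinv_le_contravar; lra].
    + replace (4 * A / c * (C_R k0 R0 * INR K) ^ K) with (A * (C_R k0 R0 * INR K) ^ K / (c / 4))
        by (field; lra).
      apply Rmult_le_compat_r; [left; apply Rinv_0_lt_compat|]; lra.
Qed.
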